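(* Let $\Phi=(A;\{E_i\}_{i=0}^d;A^*;\{E^*_i\}_{i=0}^d)$ be a tridiagonal system on $V$ with $d\ge1$, such that $(A,A^* )$ satisfies the $q$-Serre relations, with $E_iV$ the eigenspace of $A$ for $\theta_i=q^{2i-d}$ and $E^*_iV$ the eigenspace of $A^*$ for $\theta^*_i=q^{d-2i}$. Let $\{U_i\}_{i=0}^d$ be its split decomposition, $K:V\to V$ the linear map acting on $U_i$ as $q^{d-2i}I$, $t$ a scalar, $B=A$, $B^*=tA^*+(1-t)K$, $E'_i$ the primitive idempotent of $B^*$ for $\theta^*_i$, and $\Phi'=(B;\{E_i\}_{i=0}^d;B^*;\{E'_i\}_{i=0}^d)$. Then the split sequences $\{\zeta_i\}_{i=0}^d$ of $\Phi$ and $\{\zeta'_i\}_{i=0}^d$ of $\Phi'$ satisfy $\zeta'_i=t^i\zeta_i$ for $0\le i\le d$.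
   Context: $\mathcal K$ is an algebraically closed field; $V$ is a nonzero finite-dimensional vector space over $\mathcal K$; $q\in\mathcal K$ is nonzero and not a root of unity; $[3]_q=q^2+1+q^{-2}$. The $q$-Serre relations for $(X,Y)$: $X^3Y-[3]_qX^2YX+[3]_qXYX^2-YX^3=0$ and $Y^3X-[3]_qY^2XY+[3]_qYXY^2-XY^3=0$. Primitive idempotent of a diagonalizable $X$ for eigenvalue $\lambda_i$: $\prod_{j\ne i}\frac{X-\lambda_jI}{\lambda_i-\lambda_j}$. A tridiagonal system on $V$ is a sequence $(A;\{E_i\}_{i=0}^d;A^*;\{E^*_i\}_{i=0}^d)$ with $A,A^*$ diagonalizable, $\{E_i\}$, $\{E^*_i\}$ orderings of their primitive idempotents, $E_iA^*E_j=0$ and $E^*_iAE^*_j=0$ when $|i-j|>1$, and no subspaces other than $0,V$ invariant under both $A$ and $A^*$. Split decomposition: $U_i=(E^*_0V+\cdots+E^*_iV)\cap(E_iV+\cdots+E_dV)$; known: $V=U_0\oplus\cdots\oplus U_d$, $U_0=E^*_0V$ is one-dimensional, $(A-\theta_iI)U_i\subseteq U_{i+1}$, $(A^*-\theta^*_iI)U_i\subseteq U_{i-1}$ ($U_{-1}=U_{d+1}=0$). It is a fact (proved in the paper) that $B^*$ is diagonalizable with eigenvalues $\theta^*_0,\dots,\theta^*_d$ and $E'_0V=U_0$ is one-dimensional. Split sequence of a sequence $(X;\{F_i\};X^*;\{F^*_i\})$ with $X,X^*$ diagonalizable, $F_i$ (resp. $F^*_i$) primitive idempotents of $X$ (resp.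 $X^*$) for eigenvalues $\lambda_i$ (resp. $\lambda^*_i$), and $\dim F^*_0V=1$: with $\tau_i(x)=\prod_{j=0}^{i-1}(x-\lambda_j)$, $F^*_0\tau_i(X)$ acts on $F^*_0V$ as a scalar $\chi_i$, and $\zeta_i=\prod_{j=1}^i(\lambda^*_0-\lambda^*_j)\chi_i$. *)

From HB Require Import structures.
From mathcomp Require Import all_boot all_order all_algebra.
Set Implicit Arguments. Unset Strict Implicit. Unset Printing Implicit Defensive.
Import Order.TTheory GRing.Theory Num.Theory.
Local Open Scope ring_scope.

(* Convention: V = 'rV[K]_n.+1 (row vectors, nonzero space); a linear map is a
   square matrix M acting by v |-> v *m M.  Hence the operator composite XY
   ("apply Y, then X") is the matrix Y *m X, and the subspace E V is the row
   space of E. *)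

Section Defs.
Variables (K : fieldType) (n : nat).

Definition prim_idem (X : 'M[K]_n.+1) (lam : nat -> K) (d i : nat) : 'M[K]_n.+1 :=
  \prod_(j < d.+1 | (j : nat) != i) ((lam i - lam j)^-1 *: (X - (lam j)%:M)).

Definition eig_ordering (X : 'M[K]_n.+1) (lam : nat -> K) (d : nat) : Prop :=
  diagonalizable X /\
  (forall i j, (i <= d)%N -> (j <= d)%N -> lam i = lam j -> i = j) /\
  (forall i, (i <= d)%N -> eigenvalue X (lam i)) /\
  (forall a, eigenvalue X a -> exists2 i, (i <= d)%N & a = lam i).

Definition tridiagonal_system (X : 'M[K]_n.+1) (lam : nat -> K)
    (Xs : 'M[K]_n.+1) (lams : nat -> K) (d : nat) : Prop :=
  eig_ordering X lam d /\ eig_ordering Xs lams d /\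
  (forall i j, (i <= d)%N -> (j <= d)%N -> (j.+1 < i)%N \/ (i.+1 < j)%N ->
     prim_idem X lam d i *m Xs *m prim_idem X lam d j = 0) /\
  (forall i j, (i <= d)%N -> (j <= d)%N -> (j.+1 < i)%N \/ (i.+1 < j)%N ->
     prim_idem Xs lams d i *m X *m prim_idem Xs lams d j = 0) /\
  (forall W : 'M[K]_n.+1, (W *m X <= W)%MS -> (W *m Xs <= W)%MS ->
     (W == (0 : 'M[K]_n.+1))%MS \/ (W == (1%:M : 'M[K]_n.+1))%MS).

(* q-Serre relations for (X, Y) (written in operator form; each relation is
   invariant, up to sign, under reversing products) *)
Definition q_serre (q : K) (X Y : 'M[K]_n.+1) : Prop :=
  let c := q ^+ 2 + 1 + q ^- 2 in
  X ^+ 3 * Y - c *: (X ^+ 2 * Y * X) + c *: (X * Y * X ^+ 2) - Y * X ^+ 3 = 0 /\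
  Y ^+ 3 * X - c *: (Y ^+ 2 * X * Y) + c *: (Y * X * Y ^+ 2) - X * Y ^+ 3 = 0.

Definition split_U (X : 'M[K]_n.+1) (lam : nat -> K)
    (Xs : 'M[K]_n.+1) (lams : nat -> K) (d i : nat) : 'M[K]_n.+1 :=
  ((\sum_(j < d.+1 | (j <= i)%N) prim_idem Xs lams d j)
    :&: (\sum_(j < d.+1 | (i <= j)%N) prim_idem X lam d j))%MS.

Definition tau (X : 'M[K]_n.+1) (lam : nat -> K) (i : nat) : 'M[K]_n.+1 :=
  \prod_(j < i) (X - (lam j)%:M).

Definition split_sequence (X : 'M[K]_n.+1) (lam : nat -> K)
    (Xs : 'M[K]_n.+1) (lams : nat -> K) (d : nat) (zeta : nat -> K) : Prop :=
  forall i, (i <= d)%N ->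
    exists chi : K,
      (forall v : 'rV[K]_n.+1, (v <= prim_idem Xs lams d 0)%MS ->
         v *m (tau X lam i *m prim_idem Xs lams d 0) = chi *: v) /\
      zeta i = (\prod_(1 <= j < i.+1) (lams 0 - lams j)) * chi.

End Defs.

From HB Require Import structures.
From mathcomp Require Import all_boot all_order all_algebra.
Set Implicit Arguments. Unset Strict Implicit. Unset Printing Implicit Defensive.
Import Order.TTheory GRing.Theory Num.Theory.
Local Open Scope ring_scope.

(* Let u span E^*_0 V = U_0, so that v := u tau_i(A) lies in U_i, and write
   E^*_0 = p[A^*] with p = prod_{j <> 0} (x - th^*_j) / (th^*_0 - th^*_j).  On U_i,
   B^* - th^*_i = t (A^* - th^*_i), and A^* - th^*_i maps U_i into U_{i-1}.
   Applying the factors j = i, i-1, ..., 1 of p to v under B^* thus gives t^i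
   times the same under A^*, and the remaining factors act on U_0, where A^* and
   B^* both act as th^*_0.  Hence v E'_0 = t^i v E^*_0, i.e. chi'_i = t^i chi_i. *)

Lemma submx_sub (K : fieldType) m1 m2 n (A B : 'M[K]_(m1, n)) (C : 'M[K]_(m2, n)) :
  (A <= C)%MS -> (B <= C)%MS -> ((A - B)%R <= C)%MS.
Proof. by move=> sAC sBC; rewrite addmx_sub // -scaleN1r scalemx_sub. Qed.

Section PrimitiveIdempotents.
Variables (K : fieldType) (n : nat).

Lemma horner_mx_eigen m (X : 'M[K]_n.+1) (W : 'M[K]_(m, n.+1)) a (p : {poly K}) :
  W *m X = a *: W -> W *m horner_mx X p = p.[a] *: W.
Proof.
move=> WX; elim/poly_ind: p => [|p c IHp].
  by rewrite rmorph0 mulmx0 horner0 scale0r.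
rewrite rmorphD rmorphM /= horner_mx_X horner_mx_C hornerMXaddC.
rewrite mulmxDr -mulmxE mulmxA IHp -scalemxAl WX mul_mx_scalar.
by rewrite scalerA scalerDl.
Qed.

Definition prim_idem_poly (lam : nat -> K) (d i : nat) : {poly K} :=
  \prod_(j < d.+1 | (j : nat) != i) ((lam i - lam j)^-1 *: ('X - (lam j)%:P)).

Lemma prim_idemE (X : 'M[K]_n.+1) lam d i :
  prim_idem X lam d i = horner_mx X (prim_idem_poly lam d i).
Proof.
rewrite /prim_idem /prim_idem_poly rmorph_prod; apply: eq_bigr => j _.
by rewrite /= horner_mxZ rmorphB /= horner_mx_X horner_mx_C.
Qed.

Section Interpolation.
Variables (lam : nat -> K) (d : nat).
Hypothesis lam_inj : {in [pred j | (j <= d)%N] &, injective lam}.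

Lemma prim_idem_poly_eval i k : (i <= d)%N -> (k <= d)%N ->
  (prim_idem_poly lam d i).[lam k] = (i == k)%:R.
Proof.
move=> le_id le_kd; rewrite /prim_idem_poly horner_prod.
have [<-|neq_ik] := eqVneq i k.
  rewrite big1 // => j neq_ji; rewrite hornerZ hornerXsubC mulVf // subr_eq0.
  by apply: contra neq_ji => /eqP/lam_inj-> //; rewrite inE leq_ord.
rewrite (bigD1 (Ordinal (le_kd : (k < d.+1)%N))) 1?eq_sym //=.
by rewrite hornerZ hornerXsubC subrr mulr0 mul0r.
Qed.

Lemma prim_idem_fixed (X : 'M[K]_n.+1) i (v : 'rV[K]_n.+1) : (i <= d)%N ->
  v *m X = lam i *: v -> v *m prim_idem X lam d i = v.
Proof.
by move=> le_id vX; rewrite prim_idemE (horner_mx_eigen _ vX) prim_idem_poly_eval // eqxx scale1r.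
Qed.

End Interpolation.

Section Diagonalizable.
Variables (X : 'M[K]_n.+1) (lam : nat -> K) (d : nat).
Hypothesis X_lam : eig_ordering X lam d.
Let lam_inj : {in [pred j | (j <= d)%N] &, injective lam} := proj1 (proj2 X_lam).

Lemma horner_mx_spectrum_eq0 (p : {poly K}) :
  (forall k, (k <= d)%N -> p.[lam k] = 0) -> horner_mx X p = 0.
Proof.
case: X_lam => X_diag [_ [_ X_spec]] p_lam.
have /diagonalizablePeigen[rs _ rsP] := X_diag.
suff : (1%:M <= kermx (horner_mx X p))%MS by rewrite sub_kermx mul1mx => /eqP.
rewrite -rsP; elim/big_rec: _ => [|r W _ W_ker]; first exact: sub0mx.
rewrite addsmx_sub W_ker andbT.
have [r_eig|] := boolP (eigenvalue X r); last by rewrite negbK => /eqP->; exact: sub0mx.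
have [k le_kd ->] := X_spec r r_eig.
have Ek : eigenspace X (lam k) *m X = lam k *: eigenspace X (lam k) by apply/eigenspaceP.
by rewrite sub_kermx (horner_mx_eigen p Ek) p_lam // scale0r.
Qed.

Lemma sum_prim_idem : \sum_(i < d.+1) prim_idem X lam d i = 1.
Proof.
under eq_bigr do rewrite prim_idemE.
apply/eqP; rewrite -rmorph_sum -subr_eq0 -(rmorph1 (horner_mx X)) -rmorphB /=.
apply/eqP/horner_mx_spectrum_eq0 => k le_kd.
rewrite hornerD hornerN hornerC horner_sum (bigD1 (Ordinal (le_kd : (k < d.+1)%N))) //=.
rewrite prim_idem_poly_eval // eqxx big1 ?addr0 ?subrr // => j neq_jk.
have le_jd := leq_ord j.
have /negbTE neq_jk' : (j != k :> nat) by apply: contra neq_jk => /eqP eq_jk; apply/eqP/val_inj.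
by rewrite prim_idem_poly_eval // neq_jk'.
Qed.

Lemma prim_idem_eigen j : (j <= d)%N ->
  prim_idem X lam d j *m X = lam j *: prim_idem X lam d j.
Proof.
move=> le_jd; have : horner_mx X (prim_idem_poly lam d j * ('X - (lam j)%:P)) = 0.
  apply: horner_mx_spectrum_eq0 => k le_kd; rewrite hornerM hornerXsubC prim_idem_poly_eval //.
  by have [->|] := eqVneq j k; rewrite ?subrr ?mulr0 ?mul0r.
rewrite rmorphM rmorphB /= horner_mx_X horner_mx_C -prim_idemE.
by rewrite mulrBr -!mulmxE mul_mx_scalar => /eqP; rewrite subr_eq0 => /eqP.
Qed.

Lemma prim_idem_shift j c : (j <= d)%N ->
  prim_idem X lam d j *m (X - c%:M) = (lam j - c) *: prim_idem X lam d j.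
Proof. by move=> le_jd; rewrite mulmxBr prim_idem_eigen // mul_mx_scalar scalerBl. Qed.

End Diagonalizable.

Lemma mulmx_sub_sum_idem d (F : nat -> 'M[K]_n.+1) (Y : 'M[K]_n.+1) j (P : pred 'I_d.+1) :
  \sum_(k < d.+1) F k = 1 -> (forall k : 'I_d.+1, ~~ P k -> F j *m Y *m F k = 0) ->
  (F j *m Y <= \sum_(k < d.+1 | P k) F k)%MS.
Proof.
move=> sumF FYF; rewrite -[F j *m Y]mulmx1 -[1%:M]sumF mulmx_sumr.
apply/summx_sub => k _; have [Pk|nPk] := boolP (P k).
  by apply: (sumsmx_sup k) => //; apply: submxMl.
by rewrite FYF // sub0mx.
Qed.

End PrimitiveIdempotents.

Lemma prod_neq0_split (R : comNzRingType) (F : nat -> R) d i : (i <= d)%N ->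
  \prod_(j < d.+1 | (j : nat) != 0%N) F j =
  \prod_(1 <= j < i.+1) F j * \prod_(i.+1 <= j < d.+1) F j.
Proof.
move=> le_id; rewrite -(big_mkord (fun j => j != 0%N)) big_ltn_cond //= -big_cat_nat //.
by rewrite big_nat_cond [RHS]big_nat_cond; apply: eq_bigl => -[|j] /=; rewrite ?andbF ?andbT.
Qed.

Lemma prim_idem_poly0_factor (K : fieldType) (c : nat -> K) d i : (i <= d)%N ->
  exists r : {poly K}, prim_idem_poly c d 0 = \prod_(1 <= j < i.+1) ('X - (c j)%:P) * r.
Proof.
move=> le_id; rewrite /prim_idem_poly scaler_prod (prod_neq0_split (fun j => 'X - (c j)%:P) le_id).
by eexists; rewrite scalerAr.
Qed.

Section SplitDecomposition.
Variables (K : fieldType) (n d : nat) (X Xs : 'M[K]_n.+1) (lam lams : nat -> K).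
Hypothesis tri : tridiagonal_system X lam Xs lams d.
Local Notation U := (split_U X lam Xs lams d).

Let X_lam : eig_ordering X lam d := proj1 tri.
Let Xs_lams : eig_ordering Xs lams d := proj1 (proj2 tri).

Lemma split_U_raise i (w : 'rV[K]_n.+1) : (i < d)%N -> (w <= U i)%MS ->
  (w *m (X - (lam i)%:M) <= U i.+1)%MS.
Proof.
have [_ [_ [_ [Xs_tri _]]]] := tri.
move=> lt_id; rewrite !sub_capmx => /andP[wXs wX]; apply/andP; split.
  apply: submx_trans (submxMr _ wXs) _; rewrite sumsmxMr.
  apply/sumsmx_subP => j le_ji; rewrite mulmxBr; apply: submx_sub.
    apply: mulmx_sub_sum_idem (sum_prim_idem Xs_lams) _ => k; rewrite -ltnNge => lt_ik.
    by apply: Xs_tri; rewrite ?leq_ord //; right; apply: leq_ltn_trans lt_ik.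
  by rewrite mul_mx_scalar scalemx_sub // (sumsmx_sup j) // leqW.
apply: submx_trans (submxMr _ wX) _; rewrite sumsmxMr.
apply/sumsmx_subP => j le_ij; rewrite prim_idem_shift ?leq_ord //.
case: ltngtP le_ij => // [lt_ij _|eq_ij _]; first by rewrite scalemx_sub // (sumsmx_sup j).
by rewrite eq_ij subrr scale0r sub0mx.
Qed.

Lemma split_U_lower i (w : 'rV[K]_n.+1) : (0 < i <= d)%N -> (w <= U i)%MS ->
  (w *m (Xs - (lams i)%:M) <= U i.-1)%MS.
Proof.
have [_ [_ [X_tri _]]] := tri.
move=> /andP[i_gt0 le_id]; rewrite !sub_capmx => /andP[wXs wX]; apply/andP; split.
  apply: submx_trans (submxMr _ wXs) _; rewrite sumsmxMr.
  apply/sumsmx_subP => j le_ji; rewrite prim_idem_shift ?leq_ord //.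
  case: ltngtP le_ji => // [lt_ji _|eq_ji _].
    by rewrite scalemx_sub // (sumsmx_sup j) // -ltnS prednK.
  by rewrite eq_ji subrr scale0r sub0mx.
apply: submx_trans (submxMr _ wX) _; rewrite sumsmxMr.
apply/sumsmx_subP => j le_ij; rewrite mulmxBr; apply: submx_sub.
  apply: mulmx_sub_sum_idem (sum_prim_idem X_lam) _ => k; rewrite -ltnNge => lt_ki.
  by apply: X_tri; rewrite ?leq_ord //; left; apply: leq_trans le_ij; rewrite -(prednK i_gt0).
by rewrite mul_mx_scalar scalemx_sub // (sumsmx_sup j) // (leq_trans (leq_pred i)).
Qed.

Lemma split_U0_eigen (w : 'rV[K]_n.+1) : (w <= U 0)%MS -> w *m Xs = lams 0 *: w.
Proof.
rewrite sub_capmx => /andP[wXs _]; apply/eqP; rewrite -subr_eq0 -mul_mx_scalar -mulmxBr.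
apply/eqP/sub_kermxP; apply: submx_trans wXs _; apply/sumsmx_subP => j.
by rewrite leqn0 => /eqP j0; rewrite sub_kermx (prim_idem_shift Xs_lams) ?leq_ord // j0 subrr scale0r.
Qed.

Lemma prim_idem0_sub_split_U0 (w : 'rV[K]_n.+1) :
  (w <= prim_idem Xs lams d 0)%MS -> (w <= U 0)%MS.
Proof.
move=> wE0; rewrite sub_capmx (sumsmx_sup ord0) //=.
apply: submx_trans (submx1 w) _; rewrite -[1%:M](sum_prim_idem X_lam).
by apply/summx_sub => j _; apply: (sumsmx_sup j).
Qed.

Lemma tau_sub_split_U (u : 'rV[K]_n.+1) i : (u <= U 0)%MS -> (i <= d)%N ->
  (u *m tau X lam i <= U i)%MS.
Proof.
move=> uU0; elim: i => [|i IHi] le_id; first by rewrite /tau big_ord0 mulmx1.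
rewrite /tau big_ord_recr /= -mulmxE mulmxA.
by apply: split_U_raise => //; apply: IHi; apply: ltnW.
Qed.

End SplitDecomposition.

Section Lowering.
Variables (K : fieldType) (n d : nat) (S T : 'M[K]_n.+1) (c : nat -> K) (t : K).
Variable U : nat -> 'M[K]_n.+1.
Hypothesis T_lowers : forall i (w : 'rV[K]_n.+1), (0 < i <= d)%N -> (w <= U i)%MS ->
  (w *m (T - (c i)%:M) <= U i.-1)%MS.
Hypothesis S_shift : forall i (w : 'rV[K]_n.+1), (i <= d)%N -> (w <= U i)%MS ->
  w *m (S - (c i)%:M) = t *: (w *m (T - (c i)%:M)).
Hypothesis T_on_U0 : forall w : 'rV[K]_n.+1, (w <= U 0)%MS -> w *m T = c 0 *: w.

Lemma horner_mx_lowering i (w : 'rV[K]_n.+1) (p : {poly K}) :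
  (i <= d)%N -> (w <= U i)%MS ->
  let r := \prod_(1 <= j < i.+1) ('X - (c j)%:P) * p in
  w *m horner_mx S r = t ^+ i *: (w *m horner_mx T r).
Proof.
elim: i w => [|i IHi] w le_id Uw r.
  have Tw := T_on_U0 Uw.
  have Sw : w *m S = c 0 *: w.
    apply/eqP; rewrite -subr_eq0 -mul_mx_scalar -mulmxBr S_shift //.
    by rewrite mulmxBr Tw mul_mx_scalar subrr scaler0.
  by rewrite /r big_geq // mul1r (horner_mx_eigen _ Sw) (horner_mx_eigen _ Tw) scale1r.
rewrite /r big_nat_recr //= mulrAC [_ * ('X - _)]mulrC.
rewrite [horner_mx S _]rmorphM [horner_mx T _]rmorphM /= !rmorphB /=.
rewrite !horner_mx_X !horner_mx_C -!mulmxE !mulmxA S_shift //.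
rewrite -scalemxAl (IHi _ (ltnW le_id)); last exact: T_lowers.
by rewrite scalerA -exprS.
Qed.

End Lowering.

Section SplitSequenceDeformation.
Variables (K : fieldType) (n d : nat) (X Xs Ys : 'M[K]_n.+1) (lam lams : nat -> K) (t : K).
Hypothesis tri : tridiagonal_system X lam Xs lams d.
Hypothesis Ys_shift : forall i (w : 'rV[K]_n.+1), (i <= d)%N ->
  (w <= split_U X lam Xs lams d i)%MS ->
  w *m (Ys - (lams i)%:M) = t *: (w *m (Xs - (lams i)%:M)).

Lemma split_sequence_deform zeta zeta' :
  split_sequence X lam Xs lams d zeta -> split_sequence X lam Ys lams d zeta' ->
  forall i, (i <= d)%N -> zeta' i = t ^+ i * zeta i.
Proof.
move=> zetaP zeta'P i le_id.
have [_ [lams_inj [lams_eig _]]] : eig_ordering Xs lams d := proj1 (proj2 tri).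
have [u Xs_u u_neq0] := eigenvalueP (lams_eig 0%N (leq0n d)).
have E0u := prim_idem_fixed lams_inj (leq0n d) Xs_u.
have uE0 : (u <= prim_idem Xs lams d 0)%MS by rewrite -E0u submxMl.
have U0u := prim_idem0_sub_split_U0 tri uE0.
have Ys_u : u *m Ys = lams 0 *: u.
  apply/eqP; rewrite -subr_eq0 -mul_mx_scalar -mulmxBr Ys_shift //.
  by rewrite mulmxBr Xs_u mul_mx_scalar subrr scaler0.
have E0'u := prim_idem_fixed lams_inj (leq0n d) Ys_u.
have uE0' : (u <= prim_idem Ys lams d 0)%MS by rewrite -E0'u submxMl.
have [r E0r] := prim_idem_poly0_factor lams le_id.
have := horner_mx_lowering (split_U_lower tri) Ys_shift (split_U0_eigen tri) r le_id
  (tau_sub_split_U tri U0u le_id).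
rewrite /= -E0r -!prim_idemE -!mulmxA.
have [chi [chiP ->]] := zetaP i le_id.
have [chi' [chi'P ->]] := zeta'P i le_id.
rewrite (chiP _ uE0) (chi'P _ uE0') scalerA => /eqP.
rewrite -subr_eq0 -scalerBl scalemx_eq0 (negbTE u_neq0) orbF subr_eq0 => /eqP->.
by rewrite mulrCA.
Qed.

End SplitSequenceDeformation.

Theorem lemma7p10 (K : closedFieldType) (n : nat) (q : K) (d : nat)
  (A As Km : 'M[K]_n.+1) (t : K) (zeta zeta' : nat -> K) :
  q != 0 ->
  (forall m : nat, (0 < m)%N -> q ^+ m != 1) ->
  (1 <= d)%N ->
  let th := fun i : nat => q ^ ((2 * i)%:Z - d%:Z) in
  let ths := fun i : nat => q ^ (d%:Z - (2 * i)%:Z) in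
  tridiagonal_system A th As ths d ->
  q_serre q A As ->
  (forall i, (i <= d)%N -> forall v : 'rV[K]_n.+1,
     (v <= split_U A th As ths d i)%MS -> v *m Km = ths i *: v) ->
  let Bs := t *: As + (1 - t) *: Km in
  split_sequence A th As ths d zeta ->
  split_sequence A th Bs ths d zeta' ->
  forall i, (i <= d)%N -> zeta' i = t ^+ i * zeta i.
Proof.
move=> _ _ _ th ths tri _ Km_split Bs.
apply: (split_sequence_deform tri) => i w le_id Uw.
rewrite /Bs !mulmxBr mulmxDr -!scalemxAr (Km_split i le_id w Uw) !mul_mx_scalar.
by rewrite scalerBr scalerBl scale1r addrCA [LHS]addrC addKr.
Qed.
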